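(* Let $T$ be a tree with positive edge weights rooted at the homebase $r$, and let $q\ge 0$. In every cost-optimal strategy exploring $T$, for every vertex $v\neq r$, once an agent leaves the subtree $T_v$ (i.e., traverses the edge from $v$ to its parent $p(v)$ after having been in $T_v$), it never comes back to $T_v$.
   Context: Exploration model: given a connected graph with positive edge weights, a homebase vertex, and invoking cost $q\ge 0$, a strategy is a sequence of moves, each either invoking a new agent (appearing at the homebase) or an agent traversing an edge incident to its current vertex. A vertex is explored when first visited; the strategy explores the graph when every vertex has been visited by some agent (agents need not return). With $k$ agents, agent $i$ traversing total distance $d_i$ (weights counted with multiplicity), the cost is $kq+\sum_i d_i$; a strategy is cost-optimal if it explores the graph with minimum cost (off-line setting). For a rooted tree, $T_v$ is the subtree consisting of $v$ and its descendants and $p(v)$ is the parent of $v$. *)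

From HB Require Import structures.
From mathcomp Require Import all_boot all_order all_algebra.
From mathcomp Require Import reals.
Set Implicit Arguments. Unset Strict Implicit. Unset Printing Implicit Defensive.
Import Order.TTheory GRing.Theory Num.Theory.
Local Open Scope ring_scope.

(* A rooted tree on the finite vertex set V is given by its root r and its
   parent map p : V -> V with p r = r, such that every vertex reaches r by
   iterating p (so there are no other cycles).  The edges are {v, p v} for
   v != r, and the weight of the edge {v, p v} is w v. *)
Definition is_rooted_tree (V : finType) (r : V) (p : V -> V) : Prop :=
  p r = r /\ forall v : V, exists n : nat, iter n p v = r.

Definition tadj (V : finType) (r : V) (p : V -> V) (x u : V) : bool :=
  ((x != r) && (u == p x)) || ((u != r) && (x == p u)).

Definition tweight (R : realType) (V : finType) (r : V) (p : V -> V)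
  (w : V -> R) (x u : V) : R :=
  if (x != r) && (u == p x) then w x else w u.

Definition in_subtree (V : finType) (p : V -> V) (v u : V) : Prop :=
  exists n : nat, iter n p u = v.

(* Moves: invoke a new agent (it appears at the homebase), or agent number i
   (agents numbered 0,1,... in invocation order) traverses an edge to u. *)
Inductive move (V : Type) : Type :=
| Invoke : move V
| Step : nat -> V -> move V.
Arguments Invoke {V}.

Definition apply_move (V : Type) (r : V) (pos : seq V) (m : move V) : seq V :=
  match m with
  | Invoke => rcons pos r
  | Step i u => set_nth r pos i u
  end.

Definition positions (V : Type) (r : V) (s : seq (move V)) : seq V :=
  foldl (apply_move r) [::] s.

(* position of agent i just before move t (i.e. after the first t moves) *)
Definition pos_at (V : Type) (r : V) (s : seq (move V)) (t i : nat) : V :=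
  nth r (positions r (take t s)) i.

Definition valid_move (V : finType) (r : V) (p : V -> V)
  (pos : seq V) (m : move V) : bool :=
  match m with
  | Invoke => true
  | Step i u => (i < size pos)%N && tadj r p (nth r pos i) u
  end.

Definition valid_strategy (V : finType) (r : V) (p : V -> V)
  (s : seq (move V)) : Prop :=
  forall t : nat, (t < size s)%N ->
    valid_move r p (positions r (take t s)) (nth Invoke s t).

Definition visited (V : finType) (r : V) (s : seq (move V)) (x : V) : Prop :=
  exists t : nat, (t < size s)%N /\
    (nth Invoke s t = Invoke /\ x = r \/ exists i, nth Invoke s t = Step i x).

Definition explores (V : finType) (r : V) (s : seq (move V)) : Prop :=
  forall x : V, visited r s x.

Definition move_cost (R : realType) (V : finType) (r : V) (p : V -> V)
  (w : V -> R) (q : R) (pos : seq V) (m : move V) : R :=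
  match m with
  | Invoke => q
  | Step i u => tweight r p w (nth r pos i) u
  end.

Definition cost (R : realType) (V : finType) (r : V) (p : V -> V)
  (w : V -> R) (q : R) (s : seq (move V)) : R :=
  \sum_(t < size s) move_cost r p w q (positions r (take t s)) (nth Invoke s t).

Definition cost_optimal (R : realType) (V : finType) (r : V) (p : V -> V)
  (w : V -> R) (q : R) (s : seq (move V)) : Prop :=
  valid_strategy r p s /\ explores r s /\
  forall s' : seq (move V), valid_strategy r p s' -> explores r s' ->
    cost r p w q s <= cost r p w q s'.

From HB Require Import structures.
From mathcomp Require Import all_boot all_order all_algebra.
From mathcomp Require Import reals.
From Stdlib Require Import Classical.
From mathcomp Require Import lra.
Import Order.TTheory GRing.Theory Num.Theory.
Local Open Scope ring_scope.
Set Implicit Arguments. Unset Strict Implicit. Unset Printing Implicit Defensive.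

(* Suppose agent i goes down the edge {p v, v} into T_v, leaves it at time t1 and
   comes back later.  Its walk then reads  r .. p(v) v A v p(v) B p(v) v C,  where A is
   an excursion from v back to v and B one from p(v) back to p(v).  The walk
   r .. p(v) B p(v) v A v C  visits the same vertices and saves two traversals of
   {v, p v}.  Agents never interact, so agent i may perform this new walk after all
   moves of the other agents: this is a valid exploring strategy of smaller cost. *)

Section Walks.
Variables (V : finType) (r : V) (p : V -> V).
Implicit Types (s : seq (move V)) (m : move V) (P : seq V).

Definition is_invoke m : bool := if m is Invoke then true else false.

Definition invocations s : nat := count is_invoke s.

Fixpoint agent_walk (i : nat) s : seq V :=
  match s with
  | [::] => [::]
  | Invoke :: s' => agent_walk i s'
  | Step k u :: s' => if k == i then u :: agent_walk i s' else agent_walk i s'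
  end.

Definition other_moves (i : nat) s : seq (move V) :=
  [seq m <- s | if m is Step k _ then k != i else true].

Definition replace_walk (i : nat) s P : seq (move V) :=
  other_moves i s ++ map (Step i) P.

Lemma agent_walk_cat i s1 s2 :
  agent_walk i (s1 ++ s2) = agent_walk i s1 ++ agent_walk i s2.
Proof. by elim: s1 => [|[|k u] s1 IH] //=; rewrite IH; case: (k == i). Qed.

Lemma agent_walk_rcons i s m :
  agent_walk i (rcons s m) =
  if m is Step k u then (if k == i then rcons (agent_walk i s) u else agent_walk i s)
  else agent_walk i s.
Proof.
rewrite -cats1 agent_walk_cat; case: m => [|k u] /=; first by rewrite cats0.
by case: (k == i); rewrite ?cats1 ?cats0.
Qed.

Lemma agent_walk_map_step i j P :
  agent_walk j (map (Step i) P) = if i == j then P else [::].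
Proof.
elim: P => [|x P IH] /=; first by case: (i == j).
by case: (i == j) IH => //= ->.
Qed.

Lemma agent_walk_other_moves i j s :
  agent_walk j (other_moves i s) = if j == i then [::] else agent_walk j s.
Proof.
elim: s => [|[|k u] s IH] /=; first by case: ifP.
  exact: IH.
have [->|ki] := eqVneq k i.
  by rewrite /= IH; case: eqP => // /eqP ji; rewrite eq_sym (negbTE ji).
by rewrite /= IH; case: (eqVneq j i) => [->|_] //; rewrite (negbTE ki).
Qed.

Lemma invocations_cat s1 s2 :
  invocations (s1 ++ s2) = (invocations s1 + invocations s2)%N.
Proof. exact: count_cat. Qed.

Lemma invocations_other_moves i s : invocations (other_moves i s) = invocations s.
Proof.
elim: s => [|[|k u] s IH] //; rewrite /invocations /= -!/(invocations _) -IH //.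
by case: (k != i).
Qed.

Lemma positions_rcons s m :
  positions r (rcons s m) = apply_move r (positions r s) m.
Proof. by rewrite /positions foldl_rcons. Qed.

Lemma nth_positions s j : nth r (positions r s) j = last r (agent_walk j s).
Proof.
elim/last_ind: s => [|s m IH]; first by rewrite nth_nil.
rewrite positions_rcons agent_walk_rcons; case: m => [|k u] /=.
  rewrite nth_rcons IH; case: ltnP => // big; rewrite -IH nth_default //.
  by case: eqP.
rewrite nth_set_nth /= IH.
by case: eqVneq; rewrite ?last_rcons.
Qed.

Lemma valid_strategy_rcons s m :
  valid_strategy r p (rcons s m) <->
  valid_strategy r p s /\ valid_move r p (positions r s) m.
Proof.
have prefix t : (t < size s)%N ->
    take t (rcons s m) = take t s /\ nth Invoke (rcons s m) t = nth Invoke s t.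
  by move=> ts; rewrite -cats1 take_cat nth_cat ts.
have last_move : take (size s) (rcons s m) = s /\ nth Invoke (rcons s m) (size s) = m.
  by rewrite -cats1 take_cat nth_cat ltnn subnn take0 cats0.
rewrite /valid_strategy size_rcons; split.
  move=> val; split; last by have := val _ (ltnSn _); case: last_move => -> ->.
  by move=> t ts; have := val t (ltnW ts); case: (prefix t ts) => -> ->.
move=> [val vm] t; rewrite ltnS leq_eqVlt => /orP [/eqP ->|ts].
  by case: last_move => -> ->.
by case: (prefix t ts) => -> ->; apply: val.
Qed.

Lemma size_positions s :
  valid_strategy r p s -> size (positions r s) = invocations s.
Proof.
elim/last_ind: s => [|s m IH] //.
move/valid_strategy_rcons => [val vm]; rewrite positions_rcons.
rewrite -cats1 invocations_cat -IH //.
case: m vm => [|k u] /=; first by rewrite size_rcons addn1.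
by move=> /andP [/maxn_idPr grown _]; rewrite size_set_nth grown !addn0.
Qed.

Lemma valid_step s k u :
  valid_strategy r p s ->
  valid_move r p (positions r s) (Step k u) =
  (k < invocations s)%N && tadj r p (last r (agent_walk k s)) u.
Proof. by move=> val; rewrite /= size_positions // nth_positions. Qed.

Lemma path_agent_walk i s :
  valid_strategy r p s -> path (tadj r p) r (agent_walk i s).
Proof.
elim/last_ind: s => [|s m IH] //.
move/valid_strategy_rcons => [val vm]; rewrite agent_walk_rcons.
case: m vm => [|k u] vm; first exact: IH.
case: eqP => [ki|_]; last exact: IH.
rewrite rcons_path IH //; move: vm; rewrite valid_step // ki.
by case/andP.
Qed.

Lemma walk_invoked i s :
  valid_strategy r p s -> agent_walk i s != [::] -> (i < invocations s)%N.
Proof.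
elim/last_ind: s => [|s m IH] //.
move/valid_strategy_rcons => [val vm]; rewrite agent_walk_rcons.
have mono : (invocations s <= invocations (rcons s m))%N.
  by rewrite -cats1 invocations_cat leq_addr.
case: m vm mono => [|k u] vm mono.
  by move/(IH val) => lt; apply: leq_trans lt mono.
case: (eqVneq k i) => [<- _|_]; last by move/(IH val) => lt; apply: leq_trans lt mono.
by move: vm; rewrite valid_step // => /andP [lt _]; apply: leq_trans lt mono.
Qed.

Lemma valid_other_moves i s :
  valid_strategy r p s -> valid_strategy r p (other_moves i s).
Proof.
elim/last_ind: s => [|s m IH] //.
move/valid_strategy_rcons => [val vm]; rewrite /other_moves filter_rcons.
case: ifP => keep; last exact: IH.
apply/valid_strategy_rcons; split; first exact: IH.
case: m vm keep => [|k u] // vm ki.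
have val' : valid_strategy r p (other_moves i s) by exact: IH.
rewrite valid_step // in vm; rewrite valid_step //.
by rewrite invocations_other_moves agent_walk_other_moves (negbTE ki).
Qed.

Lemma valid_replace_walk i s P :
  valid_strategy r p s -> (i < invocations s)%N -> path (tadj r p) r P ->
  valid_strategy r p (replace_walk i s P).
Proof.
move=> val invoked; elim/last_ind: P => [_|P x IH].
  by rewrite /replace_walk cats0; apply: valid_other_moves.
rewrite rcons_path => /andP [pathP edge].
rewrite /replace_walk map_rcons -rcons_cat; apply/valid_strategy_rcons.
split; first exact: IH.
have val' := IH pathP.
rewrite valid_step // invocations_cat invocations_other_moves ltn_addr //=.
by rewrite agent_walk_cat agent_walk_other_moves agent_walk_map_step !eqxx.
Qed.

Lemma mem_agent_walk j x s :
  (x \in agent_walk j s) =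
  has (fun m => if m is Step k u then (k == j) && (u == x) else false) s.
Proof.
elim: s => [|[|k u] s IH] //=.
by case: (eqVneq k j) => _ /=; rewrite ?in_cons IH // eq_sym.
Qed.

Lemma visitedE s x :
  visited r s x <-> (x = r /\ has is_invoke s) \/ exists j, x \in agent_walk j s.
Proof.
split.
  move=> [t [ts [[mt ->]|[j mt]]]].
    by left; split => //; apply/(has_nthP Invoke); exists t; rewrite ?mt.
  right; exists j; rewrite mem_agent_walk; apply/(has_nthP Invoke).
  by exists t; rewrite ?mt /= ?eqxx.
move=> [[-> /(has_nthP Invoke) [t ts mt]]|[j]].
  by exists t; split => //; left; move: mt; case: nth.
rewrite mem_agent_walk => /(has_nthP Invoke) [t ts mt].
exists t; split => //; right; exists j; move: mt.
by case: nth => // k u /andP [/eqP -> /eqP ->].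
Qed.

Lemma explores_replace_walk i s P :
  explores r s -> (i < invocations s)%N -> {subset agent_walk i s <= r :: P} ->
  explores r (replace_walk i s P).
Proof.
move=> expl invoked covered x; apply/visitedE.
have walkE j : agent_walk j (replace_walk i s P) =
    if j == i then P else agent_walk j s.
  rewrite agent_walk_cat agent_walk_other_moves agent_walk_map_step eq_sym.
  by case: eqP; rewrite ?cats0.
have some_invoke : has is_invoke (replace_walk i s P).
  rewrite has_cat has_count -/(invocations _) invocations_other_moves.
  by rewrite (leq_ltn_trans _ invoked).
have [[-> _]|[j xj]] := (visitedE s x).1 (expl x); first by left.
case: (eqVneq j i) => [ji|ji]; last by right; exists j; rewrite walkE (negbTE ji).
move: xj; rewrite ji => /covered; rewrite in_cons => /orP [/eqP ->|xP]; first by left.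
by right; exists i; rewrite walkE eqxx.
Qed.

End Walks.

Section Tree.
Variables (V : finType) (r : V) (p : V -> V).

Lemma root_notin_subtree v : p r = r -> v != r -> ~ in_subtree p v r.
Proof.
move=> pr vr [n]; suff -> : iter n p r = r by move/eqP; rewrite eq_sym (negbTE vr).
by elim: n => //= n ->.
Qed.

Lemma parent_notin_subtree v :
  is_rooted_tree r p -> v != r -> ~ in_subtree p v (p v).
Proof.
move=> [pr reach] vr [n cycle].
have period k : iter (k * n.+1) p v = v.
  by elim: k => // k IH; rewrite mulSn iterD IH iterSr cycle.
have [m hit] := reach v.
apply: (root_notin_subtree pr vr); exists (m * n.+1 - m)%N.
by rewrite -hit -iterD subnK ?period // leq_pmulr.
Qed.

Lemma tadj_enter_subtree v x y :
  tadj r p x y -> ~ in_subtree p v x -> in_subtree p v y -> x = p v /\ y = v.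
Proof.
move=> /orP [/andP [_ /eqP yx]|/andP [_ /eqP xy]] xout [n yin].
  by case: xout; exists n.+1; rewrite iterSr -yx.
case: n yin => [<- //|n yin].
by case: xout; exists n; rewrite xy -iterSr.
Qed.

Lemma path_enter_subtree v x l :
  path (tadj r p) x l -> ~ in_subtree p v x -> in_subtree p v (last x l) ->
  exists l0 l1, l = l0 ++ v :: l1 /\ last x l0 = p v.
Proof.
elim: l x => [|y l IH] x /=; first by move=> _ xout /xout.
move=> /andP [xy pathl] xout inl.
have [yin|yout] := classic (in_subtree p v y).
  have [-> ->] := tadj_enter_subtree xy xout yin.
  by exists [::], l.
have [l0 [l1 [-> enter]]] := IH y pathl yout inl.
by exists (y :: l0), l1.
Qed.

End Tree.

Section Cost.
Variables (R : realType) (V : finType) (r : V) (p : V -> V) (w : V -> R) (q : R).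

Fixpoint walk_cost (x : V) (l : seq V) : R :=
  if l is y :: l' then tweight r p w x y + walk_cost y l' else 0.

Lemma walk_cost_cat x l1 l2 :
  walk_cost x (l1 ++ l2) = walk_cost x l1 + walk_cost (last x l1) l2.
Proof. by elim: l1 x => [|y l1 IH] x /=; rewrite ?add0r // IH addrA. Qed.

Lemma tweight_gt0 x y :
  (forall v, v != r -> 0 < w v) -> tadj r p x y -> 0 < tweight r p w x y.
Proof.
move=> w_gt0; rewrite /tweight /tadj.
by case: ifP => [/andP [xr _] _|_ /= /andP [yr _]]; apply: w_gt0.
Qed.

Lemma cost_rcons s m :
  cost r p w q (rcons s m) = cost r p w q s + move_cost r p w q (positions r s) m.
Proof.
rewrite /cost size_rcons big_ord_recr /=; congr (_ + _).
  by apply: eq_bigr => t _; rewrite -cats1 take_cat nth_cat ltn_ord.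
by rewrite -cats1 take_cat nth_cat ltnn subnn take0 cats0.
Qed.

Lemma cost_other_moves i s :
  cost r p w q s = cost r p w q (other_moves i s) + walk_cost r (agent_walk i s).
Proof.
elim/last_ind: s => [|s m IH]; first by rewrite /cost big_ord0 addr0.
rewrite /other_moves filter_rcons agent_walk_rcons cost_rcons IH -/(other_moves i s).
case: m => [|k u] /=; first by rewrite cost_rcons addrAC.
rewrite nth_positions; case: (eqVneq k i) => [->|ki] /=.
  by rewrite -cats1 walk_cost_cat /= addr0 addrA.
by rewrite cost_rcons /= nth_positions agent_walk_other_moves (negbTE ki) addrAC.
Qed.

Lemma cost_replace_walk i s P :
  cost r p w q (replace_walk i s P) = cost r p w q (other_moves i s) + walk_cost r P.
Proof.
rewrite (cost_other_moves i) agent_walk_cat agent_walk_map_step eqxx.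
rewrite agent_walk_other_moves eqxx /replace_walk /other_moves filter_cat.
rewrite filter_id -/(other_moves i s); congr (_ + _).
by rewrite [X in _ ++ X](_ : _ = [::]) ?cats0 //; elim: P => //= x P ->; rewrite eqxx.
Qed.

Lemma optimal_agent_walk s i P :
  cost_optimal r p w q s -> (i < invocations s)%N ->
  path (tadj r p) r P -> {subset agent_walk i s <= r :: P} ->
  walk_cost r (agent_walk i s) <= walk_cost r P.
Proof.
move=> [val [expl opt]] invoked pathP covered.
have := opt _ (valid_replace_walk val invoked pathP).
move/(_ (explores_replace_walk expl invoked covered)).
by rewrite cost_replace_walk (cost_other_moves i s) lerD2l.
Qed.

Lemma walk_reentry_shortcut v a b c :
  is_rooted_tree r p -> v != r ->
  path (tadj r p) r (a ++ p v :: b ++ c) -> last r a = v ->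
  in_subtree p v (last (p v) b) ->
  exists2 P, path (tadj r p) r P &
    {subset a ++ p v :: b ++ c <= r :: P} /\
    walk_cost r (a ++ p v :: b ++ c) =
      walk_cost r P + (tweight r p w (p v) v + tweight r p w v (p v)).
Proof.
move=> tree vr; rewrite cat_path /= cat_path => /and4P [patha _ pathb pathc].
move=> lasta inb.
have [a0 [a1 [ea enter_a]]] : exists a0 a1, a = a0 ++ v :: a1 /\ last r a0 = p v.
  by apply: path_enter_subtree patha (root_notin_subtree tree.1 vr) _; exists 0%N.
have [b0 [b1 [eb enter_b]]] :=
  path_enter_subtree pathb (parent_notin_subtree tree vr) inb.
have loop_a1 : last v a1 = v by move: lasta; rewrite ea last_cat.
move: patha pathb pathc; rewrite ea eb !cat_path /= !last_cat /= enter_a enter_b.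
move=> /and3P [patha0 enter patha1] /and3P [pathb0 _ pathb1] pathc.
exists (a0 ++ b0 ++ v :: a1 ++ b1 ++ c).
  by rewrite cat_path patha0 enter_a cat_path pathb0 enter_b /= enter !cat_path
    patha1 loop_a1 pathb1 pathc.
have pv_seen : (p v == r) || (p v \in a0) by rewrite -in_cons -enter_a mem_last.
split.
  move=> x; rewrite !(mem_cat, in_cons).
  have [-> _|_] := eqVneq x (p v); first by case/orP: pv_seen => ->; rewrite ?orbT.
  move: (x \in a0) (x \in a1) (x \in b0) (x \in b1) (x \in c) (x == v) (x == r).
  by do 7! case.
rewrite !(walk_cost_cat, last_cat) /= !(walk_cost_cat, last_cat) /=.
rewrite enter_a enter_b loop_a1; lra.
Qed.

End Cost.

Theorem mainTheorem5 (R : realType) (V : finType) (r : V) (p : V -> V)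
  (w : V -> R) (q : R) :
  is_rooted_tree r p ->
  (forall v : V, v != r -> 0 < w v) ->
  0 <= q ->
  forall s : seq (move V), cost_optimal r p w q s ->
  forall (v : V), v != r ->
  forall (i t1 : nat), (t1 < size s)%N ->
    pos_at r s t1 i = v -> nth Invoke s t1 = Step i (p v) ->
    forall t2 : nat, (t1 < t2)%N -> (t2 <= size s)%N ->
      ~ in_subtree p v (pos_at r s t2 i).
Proof.
move=> tree w_gt0 _ s opt v vr i t1 t1s at_v step_up t2 t12 _ back_in.
set k := (t2 - t1.+1)%N; set rest := drop t1.+1 s.
set a := agent_walk i (take t1 s).
set b := agent_walk i (take k rest); set c := agent_walk i (drop k rest).
have prefixE : agent_walk i (take t1.+1 s) = rcons a (p v).
  by rewrite (take_nth Invoke t1s) agent_walk_rcons step_up eqxx.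
have walkE : agent_walk i s = a ++ p v :: b ++ c.
  rewrite -{1}(cat_take_drop t1.+1 s) agent_walk_cat prefixE -/rest.
  by rewrite -(cat_take_drop k rest) agent_walk_cat cat_rcons.
have lasta : last r a = v by rewrite -at_v /pos_at nth_positions.
have b_ends_in : in_subtree p v (last (p v) b).
  move: back_in; rewrite /pos_at nth_positions -(subnKC t12) takeD.
  by rewrite agent_walk_cat prefixE last_cat last_rcons.
have walk_path : path (tadj r p) r (a ++ p v :: b ++ c).
  by rewrite -walkE; apply: path_agent_walk opt.1.
have [P pathP [covered costE]] :=
  walk_reentry_shortcut w tree vr walk_path lasta b_ends_in.
have invoked : (i < invocations s)%N.
  by apply: (walk_invoked opt.1); rewrite walkE -size_eq0 size_cat addnS.
have := optimal_agent_walk opt invoked pathP; rewrite walkE costE => /(_ covered).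
have up : 0 < tweight r p w v (p v) by apply: tweight_gt0; rewrite // /tadj vr eqxx.
have down : 0 < tweight r p w (p v) v.
  by apply: tweight_gt0; rewrite // /tadj vr eqxx orbT.
lra.
Qed.
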